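(* Let $E$ be a vector bundle on $\mathbb{P}_1$ fitting into an exact sequence of vector bundles $$0\to E\to \bigoplus_{i=1}^r\mathcal{O}(a_i)\oplus\bigoplus_{j=1}^s\mathcal{O}(-b_j)\to\mathcal{O}\to 0$$ with $r\ge 0$, $s>0$, all $a_i\ge 0$ and all $b_j>0$. If the sequence does not split, then $\mathrm{rk}^+(E^* )=s-1$.
   Context: Every vector bundle $E$ on $\mathbb{P}_1$ splits as $\bigoplus\mathcal{O}(e_i)$; the multiset of the $e_i$ is the splitting type. $\mathrm{rk}^+(E)$ denotes the number of positive entries in the splitting type, i.e. $\#\{i: e_i>0\}$. *)

From HB Require Import structures.
From mathcomp Require Import all_boot all_order all_algebra.
Set Implicit Arguments. Unset Strict Implicit. Unset Printing Implicit Defensive.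
Import Order.TTheory GRing.Theory Num.Theory.
Local Open Scope ring_scope.

(* Model of split vector bundles on P^1 over an algebraically closed field k
   (Grothendieck: every bundle is (+)_i O(c_i)).  A bundle is given by its
   splitting type c : seq int.  A morphism (+)_i O(c_i) -> (+)_j O(d_j) is a
   matrix whose (j,i) entry is a homogeneous form of degree d_j - c_i in
   k[x,y] (zero if that degree is negative).  A form of degree n is stored as
   the polynomial p with sum_l p_l x^l y^(n-l), size p <= n+1. *)

Section Bundles.
Variable k : closedFieldType.

Definition is_form (d : int) (p : {poly k}) : bool :=
  match d with Posz n => (size p <= n.+1)%N | Negz _ => p == 0 end.

Definition is_bundle_map (c d : seq int) (M : 'M[{poly k}]_(size d, size c)) :=
  forall (j : 'I_(size d)) (i : 'I_(size c)), is_form (d`_j - c`_i) (M j i).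

Definition heval (n : int) (p : {poly k}) (x y : k) : k :=
  \sum_(l < (absz n).+1) p`_l * x ^+ l * y ^+ (absz n - l).

Definition fiber {c d : seq int} (M : 'M[{poly k}]_(size d, size c)) (x y : k)
  : 'M[k]_(size d, size c) :=
  \matrix_(j, i) heval (d`_j - c`_i) (M j i) x y.

Definition short_exact (e f g : seq int)
  (iota : 'M[{poly k}]_(size f, size e)) (phi : 'M[{poly k}]_(size g, size f)) :=
  forall x y : k, (x, y) != (0, 0) ->
  [/\ (forall w : 'cV[k]_(size e), fiber iota x y *m w = 0 -> w = 0),
      (forall u : 'cV[k]_(size g), exists v, fiber phi x y *m v = u) &
      (forall v : 'cV[k]_(size f),
         fiber phi x y *m v = 0 <-> exists w, v = fiber iota x y *m w)].

Definition ses_splits (f g : seq int) (phi : 'M[{poly k}]_(size g, size f)) :=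
  exists sigma : 'M[{poly k}]_(size f, size g),
    @is_bundle_map g f sigma /\
    forall x y : k, (x, y) != (0, 0) ->
      fiber phi x y *m fiber sigma x y = 1%:M.

End Bundles.
Arguments is_bundle_map {k} c d M.
Arguments short_exact {k e f g}.
Arguments ses_splits {k f g}.

Definition dual_type (c : seq int) : seq int := map (fun x => - x) c.
Definition rkplus (c : seq int) : nat := count (fun x => 0 < x) c.

Definition Ftype (a b : seq int) : seq int := a ++ map (fun x => - x) b.

From HB Require Import structures.
From mathcomp Require Import all_boot all_order all_algebra.
From mathcomp Require Import zify.
Import Order.TTheory GRing.Theory Num.Theory.
Set Implicit Arguments. Unset Strict Implicit. Unset Printing Implicit Defensive.
Local Open Scope ring_scope.

(** Since the sequence does not split, [phi] vanishes on every summand [O(f_i)]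
    with [f_i >= 0]: such a component is a constant, and a nonzero constant
    would give a section. Hence the constant section [e_i] of such a summand
    lies in the kernel [E] at every point of the affine chart, so it lifts to
    a polynomial vector [w] with [iota w = e_i]; injectivity of [iota] at
    [[1:0]] bounds the degrees of [w], making it a global section of [E], so
    [w_j = 0] whenever [e_j < 0]. Evaluating at [[0:1]], the columns of the
    fiber of [iota] indexed by the [e_j >= 0] span exactly the coordinates
    indexed by the [f_i >= 0], so [E] and [F] have equally many nonnegative
    entries. As [rk E = rk F - 1 = r + s - 1] and [F] has [r] of them,
    [rk^+(E^* ) = #{j | e_j < 0} = s - 1]. *)

Local Notation ev x := (map_mx (horner_eval x)).

Lemma card_nth_count (T : Type) (x0 : T) (s : seq T) (a : pred T) :
  #|[set j : 'I_(size s) | a (nth x0 s j)]| = count a s.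
Proof.
rewrite -sum1_card -sum1_count (big_nth x0) big_mkord.
by apply: eq_bigl => j; rewrite inE.
Qed.

Section MatrixRank.
Variable K : fieldType.

Lemma mxE_delta m n (A : 'M[K]_(m, n)) i j :
  A i j = (A *m delta_mx j (0 : 'I_1)) i 0.
Proof. by rewrite -colE mxE. Qed.

Lemma mulmx_cV_eq0 m n (A : 'M[K]_(m, n)) :
  (forall w : 'cV_n, A *m w = 0) -> A = 0.
Proof. by move=> A0; apply/matrixP => i j; rewrite (mxE_delta A) A0 !mxE. Qed.

Lemma row_full_inj m n (A : 'M[K]_(m, n)) :
  (forall w : 'cV_n, A *m w = 0 -> w = 0) -> row_full A.
Proof.
move=> injA; rewrite -cokermx_eq0; apply/eqP/matrixP => i j.
rewrite (mxE_delta (cokermx A)) (injA (cokermx A *m delta_mx j 0)) ?mxE //.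
by rewrite mulmxA mulmx_coker mul0mx.
Qed.

Lemma mulmx_colsE m n p (A : 'M[K]_(m, n)) (v : 'I_p -> 'cV_n) :
  A *m (\matrix_(j, l) v l j 0) = \matrix_(i, l) (A *m v l) i 0.
Proof.
by apply/matrixP => i l; rewrite !mxE; apply: eq_bigr => j _; rewrite !mxE.
Qed.

Lemma mxrank_surj m n (B : 'M[K]_(m, n)) :
  (forall u : 'cV_m, exists v, B *m v = u) -> \rank B = m.
Proof.
move=> surjB; have [v Bv] := fin_all_exists (fun j : 'I_m => surjB (delta_mx j 0)).
have BV : B *m (\matrix_(i, j) v j i 0) = 1%:M.
  by apply/matrixP => i j; rewrite mulmx_colsE mxE Bv !mxE andbT.
apply/eqP; rewrite eqn_leq rank_leq_row -{1}(mxrank1 K m) -BV.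
exact: mxrankM_maxl.
Qed.

Lemma eq_mxrank_factor m n p (A : 'M[K]_(m, n)) (B : 'M[K]_(m, p)) C D :
  A = B *m C -> B = A *m D -> \rank A = \rank B.
Proof.
move=> eA eB; apply/eqP; rewrite eqn_leq.
by rewrite {1}eA mxrankM_maxl /= {1}eB mxrankM_maxl.
Qed.

Lemma exact_mx_dim m n p (A : 'M[K]_(m, n)) (B : 'M[K]_(p, m)) :
  (forall w : 'cV_n, A *m w = 0 -> w = 0) ->
  (forall u : 'cV_p, exists v, B *m v = u) ->
  (forall v : 'cV_m, B *m v = 0 <-> exists w, v = A *m w) ->
  (n + p)%N = m.
Proof.
move=> injA surjB exactAB.
have rkA : \rank A^T = n by rewrite mxrank_tr; apply/eqP/row_full_inj.
have rkB : \rank B^T = p by rewrite mxrank_tr; apply: mxrank_surj.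
have sAK : (A^T <= kermx B^T)%MS.
  apply/sub_kermxP; rewrite -trmx_mul (mulmx_cV_eq0 (A := B *m A)) ?trmx0 //.
  by move=> w; rewrite -mulmxA; apply/exactAB; exists w.
have sKA : (kermx B^T <= A^T)%MS.
  apply/row_subP => i; move/sub_kermxP: (row_sub i (kermx B^T)).
  move/(congr1 trmx); rewrite trmx_mul trmxK trmx0 => /exactAB[w].
  by move/(congr1 trmx); rewrite trmxK trmx_mul => ->; apply: submxMl.
have := mxrankS sAK; have := mxrankS sKA; have := rank_leq_row B^T.
by rewrite mxrank_ker rkA rkB; lia.
Qed.

Definition selmx m (R : {set 'I_m}) : 'M[K]_(m, #|R|) := colsub enum_val 1%:M.

Lemma rowsub_selmx m (R : {set 'I_m}) : rowsub enum_val (selmx R) = 1%:M.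
Proof. by apply/matrixP => l l'; rewrite !mxE (inj_eq enum_val_inj). Qed.

Lemma mulmx_selmx m n (A : 'M[K]_(m, n)) (P : {set 'I_n}) :
  A *m selmx P = colsub enum_val A.
Proof. by rewrite mulmx_colsub mulmx1. Qed.

Lemma selmx_rowsub m p (R : {set 'I_m}) (X : 'M[K]_(m, p)) :
  (forall i, i \notin R -> row i X = 0) -> selmx R *m rowsub enum_val X = X.
Proof.
move=> X0; apply/matrixP => i q; rewrite mxE.
have [iR|iR] := boolP (i \in R); last first.
  have /rowP/(_ q) := X0 i iR; rewrite !mxE => ->; rewrite big1 // => l _.
  rewrite !mxE; case: eqP => [ei|]; rewrite ?mul0r //.
  by move: iR; rewrite ei enum_valP.
rewrite (bigD1 (enum_rank_in iR i)) //= big1 ?addr0 => [|l ne_l].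
  by rewrite !mxE enum_rankK_in // eqxx mul1r.
rewrite !mxE; case: eqP => [ei|]; rewrite ?mul0r //.
by case/negP: ne_l; apply/eqP/enum_val_inj; rewrite enum_rankK_in.
Qed.

Lemma row_full_mulmx_selmx m n (A : 'M[K]_(m, n)) (P : {set 'I_n}) :
  (forall w : 'cV_n, A *m w = 0 -> w = 0) -> row_full (A *m selmx P).
Proof.
move=> injA; apply: row_full_inj => z; rewrite -mulmxA => /injA selz.
rewrite -[z]mul1mx -(rowsub_selmx P) mul_rowsub_mx selz.
by apply/matrixP => i j; rewrite !mxE.
Qed.

Lemma card_support_block m n (A : 'M[K]_(m, n)) (R : {set 'I_m})
    (P : {set 'I_n}) :
  (forall w : 'cV_n, A *m w = 0 -> w = 0) ->
  (forall i j, i \notin R -> j \in P -> A i j = 0) ->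
  (forall i, i \in R -> exists2 c : 'cV_n,
     (forall j, j \notin P -> c j 0 = 0) & A *m c = delta_mx i 0) ->
  #|P| = #|R|.
Proof.
move=> injA A0 liftA; pose B := A *m selmx P.
have /eqP rkB : row_full B by apply: row_full_mulmx_selmx.
have /eqP rkR : row_full (selmx R).
  by rewrite -[selmx R]mul1mx; apply: row_full_mulmx_selmx => w; rewrite mul1mx.
have [c cP Ac] := fin_all_exists2 (fun l : 'I_#|R| => liftA _ (enum_valP l)).
rewrite -{}rkB -{}rkR; apply: (eq_mxrank_factor (C := rowsub enum_val B)
    (D := \matrix_(l', l) rowsub enum_val (c l) l' 0)).
  apply/esym/selmx_rowsub => i iR; apply/rowP => l.
  by rewrite /B mulmx_selmx !mxE A0 // enum_valP.
rewrite mulmx_colsE; apply/matrixP => i l.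
rewrite [RHS]mxE /B -mulmxA selmx_rowsub.
  by rewrite Ac !mxE andbT.
by move=> j jP; apply/rowP => z; rewrite ord1 !mxE cP.
Qed.

End MatrixRank.

Section Forms.
Variable k : closedFieldType.

Definition coefz (p : {poly k}) (t : int) : k := if t is Posz n then p`_n else 0.

Lemma is_formE (n : int) (p : {poly k}) :
  is_form n p = (p == 0) || ((size p)%:Z <= n + 1).
Proof.
case: n => n; rewrite /is_form;
  have [->|p0] := eqVneq p 0; rewrite ?size_poly0 ?eqxx //.
all: rewrite ?(negPf p0) ?orFb; have := size_poly_gt0 p; rewrite p0 => sp.
all: by apply/idP/idP; lia.
Qed.

Lemma is_form_neg (n : int) (p : {poly k}) : n < 0 -> is_form n p -> p = 0.
Proof. by case: n => n //= _ /eqP. Qed.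

Lemma coefz_form (n t : int) (p : {poly k}) :
  is_form n p -> n < t -> coefz p t = 0.
Proof.
rewrite is_formE => /orP[/eqP-> _|hp nt]; first by case: t => t; rewrite /= ?coef0.
case: t nt => t nt //; apply: nth_default; rewrite -lez_nat (le_trans hp) //; lia.
Qed.

Lemma coefz_sum n (F : 'I_n -> {poly k}) (t : int) :
  coefz (\sum_j F j) t = \sum_j coefz (F j) t.
Proof. by case: t => t /=; [exact: coef_sum | rewrite big1]. Qed.

Lemma coefz0 (t : int) : coefz 0 t = 0.
Proof. by case: t => t; rewrite /= ?coef0. Qed.

Lemma coefz_mul_form (t s : int) (p q : {poly k}) :
  is_form t p -> is_form s q ->
  coefz (p * q) (t + s) = coefz p t * coefz q s.
Proof.
case: t => t; last by move/eqP->; rewrite mul0r !coefz0 mul0r.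
case: s => s; last by move=> _ /eqP->; rewrite mulr0 !coefz0 mulr0.
rewrite -PoszD /= coefM => hp hq.
have ht : (t < (t + s).+1)%N by rewrite ltnS leq_addr.
rewrite (bigD1 (Ordinal ht)) //= addKn big1 ?addr0 // => l /eqP ne_lt.
have [lt_tl|le_lt] := ltnP t l.
  by rewrite nth_default ?mul0r // (leq_trans hp).
rewrite [q`_ _]nth_default ?mulr0 //; apply: leq_trans hq _.
suff : (l < t)%N by lia.
rewrite ltn_neqAle le_lt andbT; apply/eqP => e; apply: ne_lt; exact: val_inj.
Qed.

Lemma heval_poly0 (n : int) (x y : k) : heval n 0 x y = 0.
Proof. by rewrite /heval big1 // => l _; rewrite coef0 !mul0r. Qed.

Lemma heval_deg0 (p : {poly k}) (x y : k) : heval 0 p x y = p`_0.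
Proof. by rewrite /heval big_ord1 !expr0 !mulr1. Qed.

Lemma heval_form_x1 (n : int) (p : {poly k}) (x : k) :
  is_form n p -> heval n p x 1 = p.[x].
Proof.
case: n => n hp; last by rewrite (eqP hp) heval_poly0 horner0.
rewrite /heval (horner_coef_wide x hp).
by apply: eq_bigr => l _; rewrite expr1n mulr1.
Qed.

Lemma heval_form_10 (n : int) (p : {poly k}) :
  is_form n p -> heval n p 1 0 = coefz p n.
Proof.
case: n => n hp; last by rewrite (eqP hp) heval_poly0 coefz0.
rewrite /heval big_ord_recr /= subnn expr0 expr1n !mulr1 big1 ?add0r // => l _.
by rewrite expr0n subn_eq0 leqNgt ltn_ord mulr0.
Qed.

Lemma fiber_x1 (c d : seq int) (M : 'M[{poly k}]_(size d, size c)) (x : k) :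
  is_bundle_map c d M -> fiber M x 1 = ev x M.
Proof. by move=> hM; apply/matrixP => i j; rewrite !mxE heval_form_x1. Qed.

Lemma fiber_10_top_coef (c d : seq int) (M : 'M[{poly k}]_(size d, size c))
    (w : 'cV_(size c)) (D : int) :
  is_bundle_map c d M -> (forall j : 'I_(size c), is_form (c`_j + D) (w j 0)) ->
  fiber M 1 0 *m (\col_(j < size c) coefz (w j 0) (c`_j + D))
  = \col_(i < size d) coefz ((M *m w) i 0) (d`_i + D).
Proof.
move=> hM hw; apply/colP => i; rewrite !mxE coefz_sum; apply: eq_bigr => j _.
have -> : d`_i + D = (d`_i - c`_j) + (c`_j + D) by rewrite addrA subrK.
by rewrite !mxE heval_form_10 // coefz_mul_form.
Qed.

Lemma is_form_preimage (c d : seq int) (M : 'M[{poly k}]_(size d, size c))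
    (w : 'cV_(size c)) :
  is_bundle_map c d M -> (forall u : 'cV_(size c), fiber M 1 0 *m u = 0 -> u = 0) ->
  (forall i : 'I_(size d), is_form d`_i ((M *m w) i 0)) ->
  forall j : 'I_(size c), is_form c`_j (w j 0).
Proof.
(* Otherwise, at the maximal excess D > 0 of deg w_j over c_j, the top
   coefficients of w form a nonzero vector killed by the fiber at [1:0]. *)
move=> hM inj_oo hv j1; apply/negPn/negP => not_form.
have nz1 : w j1 0 != 0 by apply: contraNneq not_form => ->; rewrite is_formE eqxx.
pose excess j := (size (w j 0))%:Z - 1 - c`_j.
have [j0 nz0 max0] := arg_maxP (P := fun j => w j 0 != 0) excess nz1.
set D := excess j0.
have D_gt0 : 0 < D.
  apply: lt_le_trans (max0 _ nz1); move: not_form.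
  by rewrite is_formE (negPf nz1) /excess; lia.
have hwD (j : 'I_(size c)) : is_form (c`_j + D) (w j 0).
  rewrite is_formE; have [//|nzj] := eqVneq (w j 0) 0.
  have le_jD : excess j <= D := max0 j nzj.
  by move: le_jD; rewrite /excess; lia.
have top0 : \col_(j < size c) coefz (w j 0) (c`_j + D) = 0.
  apply: inj_oo; rewrite fiber_10_top_coef //; apply/colP => i; rewrite mxE [RHS]mxE.
  by apply: coefz_form (hv i) _; lia.
have /colP/(_ j0) := top0; rewrite !mxE.
have -> : c`_j0 + D = (size (w j0 0)).-1.
  by have := size_poly_gt0 (w j0 0); rewrite nz0 /D /excess; lia.
by rewrite /= -lead_coefE; apply/eqP; rewrite lead_coef_eq0.
Qed.

End Forms.

Section PolynomialLift.
Variable k : closedFieldType.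

Lemma poly_mx_eval_inj m n (A B : 'M[{poly k}]_(m, n)) :
  (forall x, ev x A = ev x B) -> A = B.
Proof.
move=> eqAB; apply/matrixP => i j; apply/eqP; rewrite -subr_eq0; apply/negPn/negP.
case/closed_nonrootP => x; rewrite /root hornerD hornerN.
have /matrixP/(_ i j) := eqAB x; rewrite !mxE /= !horner_evalE => ->.
by rewrite subrr eqxx.
Qed.

Lemma mulmx_cancel_XsubC m n (M : 'M[{poly k}]_(m, n)) (W : 'cV_n) (v : 'cV_m)
    (x : k) :
  (forall w : 'cV[k]_n, ev x M *m w = 0 -> w = 0) ->
  M *m W = ('X - x%:P) *: v -> exists W', M *m W' = v.
Proof.
move=> injx MW; have q0 : 'X - x%:P != 0 by rewrite polyXsubC_eq0.
have Wx0 : ev x W = 0.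
  apply: injx; rewrite -map_mxM MW map_mxZ /= horner_evalE hornerXsubC.
  by rewrite subrr scale0r.
exists (\col_i (W i 0 %/ ('X - x%:P))).
apply: (scalemx_inj q0); rewrite -MW scalemxAr.
congr (_ *m _); apply/colP => i; rewrite !mxE mulrC divpK // dvdp_XsubCl.
by apply/rootP; have /colP/(_ i) := Wx0; rewrite !mxE.
Qed.

Lemma mulmx_cancel_scale m n (M : 'M[{poly k}]_(m, n)) (W : 'cV_n) (v : 'cV_m)
    (d : {poly k}) :
  (forall x (w : 'cV[k]_n), ev x M *m w = 0 -> w = 0) -> d != 0 ->
  M *m W = d *: v -> exists w, M *m w = v.
Proof.
move=> injM d0; have [r ->] := closed_field_poly_normal d.
have lc0 : lead_coef d != 0 by rewrite lead_coef_eq0.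
elim: r W => [|z r IH] W; rewrite ?big_nil ?big_cons => MW.
  exists ((lead_coef d)^-1%:P *: W); rewrite -scalemxAr MW scalerA alg_polyC -polyCM.
  by rewrite mulVf // scale1r.
move: MW; rewrite scalerAr -scalerA => /(mulmx_cancel_XsubC (injM z))[W'].
exact: IH.
Qed.

Lemma mulmx_poly_lift m n (M : 'M[{poly k}]_(m, n)) (v : 'cV_m) :
  (forall x (w : 'cV[k]_n), ev x M *m w = 0 -> w = 0) ->
  (forall x, exists w : 'cV[k]_n, ev x v = ev x M *m w) ->
  exists w, M *m w = v.
Proof.
(* Cramer's rule for a square submatrix S of M, invertible at x = 0, solves
   M w = det S *: v; the factor det S is then cancelled. *)
move=> injM solvM; have fullM0 := row_full_inj (injM 0).
pose f := fullrankfun fullM0; pose S := rowsub f M.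
have detS0 : \det S != 0.
  have := fullrowsub_unit fullM0; rewrite unitmxE unitfE -map_mxsub det_map_mx.
  by apply: contraNneq => ->; rewrite /= horner_evalE horner0.
apply: (mulmx_cancel_scale (W := \adj S *m rowsub f v) injM detS0).
apply: poly_mx_eval_inj => x; have [w vx] := solvM x.
rewrite map_mxZ !map_mxM map_mx_adj !map_mxsub vx -mul_rowsub_mx.
rewrite [\adj _ *m (_ *m _)]mulmxA mul_adj_mx mul_scalar_mx scalemxAr.
by rewrite -map_mxsub det_map_mx.
Qed.

End PolynomialLift.

Section ShortExactSequences.
Variable k : closedFieldType.

Lemma pair_x1_neq0 (x : k) : (x, 1) != (0, 0 : k).
Proof. by rewrite xpair_eqE oner_eq0 andbF. Qed.

Lemma pair_10_neq0 : ((1, 0) : k * k) != (0, 0).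
Proof. by rewrite xpair_eqE oner_eq0. Qed.

Lemma short_exact_size (e f g : seq int) (iota : 'M[{poly k}]_(size f, size e))
    (phi : 'M[{poly k}]_(size g, size f)) :
  short_exact iota phi -> (size e + size g)%N = size f.
Proof. by move=> hex; have [] := hex 0 1 (pair_x1_neq0 0); apply: exact_mx_dim. Qed.

Lemma ses_splits_nonneg_entry (f : seq int)
    (phi : 'M[{poly k}]_(size [:: 0 : int], size f)) (i : 'I_(size f)) :
  is_bundle_map f [:: 0] phi -> 0 <= f`_i -> phi 0 i != 0 -> ses_splits phi.
Proof.
move=> hphi fi_ge0 phi_i0; have := hphi 0 i.
rewrite (_ : [:: 0 : int]`_0 = 0) //.
rewrite is_formE (negPf phi_i0) orFb sub0r => size_phi.
have := size_poly_gt0 (phi 0 i); rewrite phi_i0 => size_gt0.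
have [fi0 size1] : f`_i = 0 /\ size (phi 0 i) = 1%N.
  by move: size_phi size_gt0; set s := size _; lia.
have /size_poly1P[c c0 phiC] := introT eqP size1.
exists (\matrix_(l, z) if l == i then c^-1%:P else 0); split.
  move=> l z; rewrite mxE; case: eqP => [->|_]; last by rewrite is_formE eqxx.
  have -> : f`_i - [:: 0 : int]`_z = 0 by rewrite ord1 fi0.
  exact: size_polyC_leq1.
move=> x y _; apply/matrixP => z z'; rewrite !ord1 !mxE (bigD1 i) //= big1 ?addr0.
  rewrite !mxE eqxx (_ : [:: 0 : int]`_0 = 0) // fi0 subrr !heval_deg0 phiC.
  by rewrite !coefC /= mulfV.
by move=> l /negPf ne_li; rewrite !mxE ne_li heval_poly0 mulr0.
Qed.

End ShortExactSequences.

Section NonsplitExtension.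
Variable k : closedFieldType.

Variables (e f : seq int) (iota : 'M[{poly k}]_(size f, size e))
  (phi : 'M[{poly k}]_(size [:: 0 : int], size f)).
Hypotheses (hiota : is_bundle_map e f iota) (hphi : is_bundle_map f [:: 0] phi)
  (hex : short_exact iota phi) (hns : ~ ses_splits phi).

Lemma nonneg_section_lift (i : 'I_(size f)) : 0 <= f`_i ->
  exists2 c : 'cV[k]_(size e),
    (forall j : 'I_(size e), e`_j < 0 -> c j 0 = 0) &
    fiber iota 0 1 *m c = delta_mx i 0.
Proof.
move=> fi_ge0; have phi_i0 : phi 0 i = 0.
  by apply/eqP/negPn/negP => /(ses_splits_nonneg_entry hphi fi_ge0)/hns.
have [w iota_w] : exists w : 'cV_(size e), iota *m w = delta_mx i 0.
  apply: mulmx_poly_lift => x; have [inj_x _ exact_x] := hex (pair_x1_neq0 x).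
    by rewrite -(fiber_x1 _ hiota).
  rewrite -(fiber_x1 _ hiota) map_delta_mx; apply/exact_x.
  rewrite -colE (fiber_x1 _ hphi); apply/colP => z.
  by rewrite ord1 !mxE phi_i0 /= horner_evalE horner0.
have w_form : forall j : 'I_(size e), is_form e`_j (w j 0).
  apply: (is_form_preimage hiota) => [u|l].
    by have [inj_oo _ _] := hex (pair_10_neq0 k); apply: inj_oo.
  rewrite iota_w mxE eqxx andbT; case: eqP => [->|_]; rewrite is_formE ?eqxx //.
  by rewrite size_poly1; lia.
exists (ev 0 w) => [j ej|].
  by rewrite mxE (is_form_neg ej (w_form j)) /= horner_evalE horner0.
by rewrite (fiber_x1 _ hiota) -map_mxM iota_w map_delta_mx.
Qed.

Lemma count_nonneg_nonsplit :
  count (fun x : int => 0 <= x) e = count (fun x : int => 0 <= x) f.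
Proof.
rewrite -!(card_nth_count 0); apply: (card_support_block (A := fiber iota 0 1)).
- by have [] := hex (pair_x1_neq0 0).
- move=> i j; rewrite !inE -ltNge => fi_lt0 ej_ge0; rewrite mxE.
  rewrite (is_form_neg _ (hiota i j)) ?heval_poly0 //.
  by rewrite subr_lt0 (lt_le_trans fi_lt0 ej_ge0).
- move=> i; rewrite inE => /nonneg_section_lift[c c_supp iota_c].
  by exists c => // j; rewrite inE -ltNge => /c_supp.
Qed.

End NonsplitExtension.

Lemma count_nonneg_Ftype (a b : seq int) :
  all (fun x : int => 0 <= x) a -> all (fun x : int => 0 < x) b ->
  count (fun x : int => 0 <= x) (Ftype a b) = size a.
Proof.
rewrite all_count => /eqP ca hb; rewrite count_cat count_map ca.
rewrite (eq_in_count (a2 := pred0)) ?count_pred0 ?addn0 // => x /(allP hb) x_gt0.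
by rewrite /= oppr_ge0 leNgt x_gt0.
Qed.

Lemma rkplus_dual_type (s : seq int) :
  rkplus (dual_type s) = (size s - count (fun x : int => (0 <= x)%R) s)%N.
Proof.
rewrite /rkplus /dual_type count_map -(count_predC (fun x : int => 0 <= x) s) addKn.
by apply: eq_count => x /=; rewrite oppr_gt0 ltNge.
Qed.

Theorem lemma2p7 (k : closedFieldType) (a b e : seq int)
  (ha : all (fun x : int => 0 <= x) a) (hb : all (fun x : int => 0 < x) b)
  (hs : (0 < size b)%N)
  (iota : 'M[{poly k}]_(size (Ftype a b), size e))
  (phi : 'M[{poly k}]_(size [:: 0 : int], size (Ftype a b)))
  (hiota : is_bundle_map e (Ftype a b) iota)
  (hphi : is_bundle_map (Ftype a b) [:: 0] phi)
  (hex : short_exact iota phi)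
  (hns : ~ ses_splits phi) :
  rkplus (dual_type e) = (size b).-1.
Proof.
rewrite rkplus_dual_type (count_nonneg_nonsplit hiota hphi hex hns).
rewrite count_nonneg_Ftype //.
by have := short_exact_size hex; rewrite /Ftype size_cat size_map /=; lia.
Qed.
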